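(* Let $C$ be a finite set. Let $\mathbb P$ be a probability measure on $\{0,1\}^C$ of the form $\bigotimes_{i\in C}\mathrm{Bernoulli}(p_i)$. Let $\mathcal E_1$ and $\mathcal E_2$ be two increasing subsets of $\{0,1\}^C$. Let $\mathbf P$ be a probability measure on $\{0,1\}^{C\times\{1,2\}}$ of the form $\bigotimes_{i\in C}\rho_i$, where each $\rho_i$ is a probability measure on $\{0,1\}^{\{i\}\times\{1,2\}}\cong\{0,1\}^2$ both of whose marginals are Bernoulli distributions of parameter at least $p_i$. Then $\mathbb P(\mathcal E_1\circ\mathcal E_2)\le \mathbf P(\mathcal E_1\times\mathcal E_2)$, where $\mathcal E_1\times\mathcal E_2$ denotes the set of $\omega\in\{0,1\}^{C\times\{1,2\}}$ with $(\omega_{(i,1)})_{i\in C}\in\mathcal E_1$ and $(\omega_{(i,2)})_{i\in C}\in\mathcal E_2$.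
   Context: A subset $\mathcal E\subset\{0,1\}^C$ is increasing if $\omega\in\mathcal E$ and $\omega\le\omega'$ coordinatewise imply $\omega'\in\mathcal E$. The disjoint occurrence $\mathcal E_1\circ\mathcal E_2$ is the set of $\omega\in\{0,1\}^C$ for which there exist disjoint subsets $P_1,P_2\subset C$ such that, for $j\in\{1,2\}$, every $\omega'\in\{0,1\}^C$ agreeing with $\omega$ on $P_j$ belongs to $\mathcal E_j$. *)

From mathcomp Require Import all_boot all_order all_algebra.
Set Implicit Arguments. Unset Strict Implicit. Unset Printing Implicit Defensive.
Import Order.TTheory GRing.Theory Num.Theory.
Local Open Scope ring_scope.

Definition config (C : finType) := {ffun C -> bool}.

Definition increasing (C : finType) (E : {set config C}) : Prop :=
  forall w w' : config C, w \in E -> (forall i, w i <= w' i)%N -> w' \in E.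

Definition disj_occ (C : finType) (E1 E2 : {set config C}) : {set config C} :=
  [set w : config C | [exists P1 : {set C}, exists P2 : {set C},
     [disjoint P1 & P2] &&
     [forall w' : config C, [forall i in P1, w' i == w i] ==> (w' \in E1)] &&
     [forall w' : config C, [forall i in P2, w' i == w i] ==> (w' \in E2)]]].

Definition bern_prod (R : numDomainType) (C : finType) (p : C -> R)
  (E : {set config C}) : R :=
  \sum_(w in E) \prod_(i : C) (if w i then p i else 1 - p i).

(* configurations on C x {1,2}; index 1 is ord0, index 2 is ord_max *)
Definition config2 (C : finType) := {ffun (C * 'I_2) -> bool}.

Definition proj1c (C : finType) (w : config2 C) : config C :=
  [ffun i => w (i, ord0)].
Definition proj2c (C : finType) (w : config2 C) : config C :=
  [ffun i => w (i, ord_max)].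

Definition prod_event (C : finType) (E1 E2 : {set config C}) : {set config2 C} :=
  [set w : config2 C | (proj1c w \in E1) && (proj2c w \in E2)].

(* rho i a b = rho_i(omega_(i,1) = a, omega_(i,2) = b); product measure *)
Definition prod_rho (R : numDomainType) (C : finType) (rho : C -> bool -> bool -> R)
  (F : {set config2 C}) : R :=
  \sum_(w in F) \prod_(i : C) rho i (w (i, ord0)) (w (i, ord_max)).

Definition is_prob2 (R : numDomainType) (r : bool -> bool -> R) : Prop :=
  (forall a b, 0 <= r a b) /\ \sum_(a : bool) \sum_(b : bool) r a b = 1.

From mathcomp Require Import all_boot all_order all_algebra.
From mathcomp Require Import ring lra.
Set Implicit Arguments. Unset Strict Implicit. Unset Printing Implicit Defensive.
Import Order.TTheory GRing.Theory Num.Theory.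
Local Open Scope ring_scope.

(* Induction on a set S of coordinates outside of which E1 and E2 are constant,
   removing one coordinate i of S at a time. Write A_ab for the disjoint
   occurrence of the section of E1 at omega_i = a and the section of E2 at
   omega_i = b. Since two disjoint witnesses cannot both contain i, conditioning
   on omega_i puts E1 o E2 inside A_00 when omega_i = 0 and inside
   A_10 \/ A_01 when omega_i = 1. Conditioning the coupled measure on the pair
   at i gives the sum of rho_i(a, b) times the coupled probability of the
   sections, which by induction dominates P(A_ab). What remains is an
   inequality between numbers: monotonicity gives A_00 in A_10 /\ A_01 and
   A_10 \/ A_01 in A_11, and the marginals of rho_i dominate Bernoulli(p_i). *)

Section CoordinateUpdate.
Variables (C B : finType).
Implicit Types (w : {ffun C -> B}) (E : {set {ffun C -> B}}).

Definition fupd w i b : {ffun C -> B} := [ffun j => if j == i then b else w j].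

Lemma fupd_eq w i b : fupd w i b i = b.
Proof. by rewrite ffunE eqxx. Qed.

Lemma fupd_id w i : fupd w i (w i) = w.
Proof. by apply/ffunP=> j; rewrite ffunE; case: eqP => // ->. Qed.

Lemma fupd_fupd w i a b : fupd (fupd w i a) i b = fupd w i b.
Proof. by apply/ffunP=> j; rewrite !ffunE; case: eqP. Qed.

Definition slice E i b := [set w | fupd w i b \in E].

Definition depends_on E (S : {set C}) :=
  forall w w', {in S, w =1 w'} -> (w \in E) = (w' \in E).

Lemma depends_on_setT E : depends_on E [set: C].
Proof. by move=> w w' ww'; congr (_ \in E); apply/ffunP=> j; apply: ww'. Qed.

Lemma depends_on_set0 E : depends_on E set0 -> E = set0 \/ E = [set: {ffun C -> B}].
Proof.
move=> dE; have [->|/set0Pn [w0 Ew0]] := eqVneq E set0; first by left.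
by right; apply/setP=> w; rewrite in_setT -(dE w0) // => j; rewrite inE.
Qed.

Lemma slice_depends_on E S i b : depends_on E S -> depends_on (slice E i b) (S :\ i).
Proof.
move=> dE w w' ww'; rewrite !inE; apply: dE => j jS; rewrite !ffunE.
by case: eqVneq => // ji; apply: ww'; rewrite !inE ji.
Qed.

End CoordinateUpdate.

Section ProductMeasure.
Variables (R : numDomainType) (C B : finType) (h : C -> B -> R).
Implicit Types (w : {ffun C -> B}) (E F : {set {ffun C -> B}}).

Definition prob E : R := \sum_(w in E) \prod_j h j (w j).

Lemma sum_coord_fupd (G : {ffun C -> B} -> R) i b c :
  \sum_(w : {ffun C -> B} | w i == b) G w =
  \sum_(w : {ffun C -> B} | w i == c) G (fupd w i b).
Proof.
rewrite (reindex_onto (fun w : {ffun C -> B} => fupd w i b) (fun w => fupd w i c)); last first.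
  by move=> w /eqP <-; rewrite fupd_fupd fupd_id.
apply: eq_bigl => w; rewrite fupd_eq eqxx fupd_fupd /=.
apply/eqP/eqP => [<-|<-]; first exact: fupd_eq.
exact: fupd_id.
Qed.

Hypothesis h_ge0 : forall j b, 0 <= h j b.
Hypothesis h_sum1 : forall j, \sum_b h j b = 1.

Lemma sum_marginal (M : {ffun C -> B} -> R) i b :
  (forall w c, M (fupd w i c) = M w) ->
  \sum_(w : {ffun C -> B}) h i (w i) * M w = \sum_(w : {ffun C -> B} | w i == b) M w.
Proof.
move=> Minv; rewrite (partition_big (fun w : {ffun C -> B} => w i) predT) //=.
transitivity (\sum_c h i c * \sum_(w : {ffun C -> B} | w i == b) M w); last first.
  by rewrite -big_distrl /= h_sum1 mul1r.
apply: eq_bigr => c _; rewrite big_distrr (sum_coord_fupd _ _ c b) /=.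
by apply: eq_bigr => w _; rewrite Minv fupd_eq.
Qed.

Lemma prob_slice E i : prob E = \sum_b h i b * prob (slice E i b).
Proof.
pose K w := \prod_(j | j != i) h j (w j).
have weightE w : \prod_j h j (w j) = h i (w i) * K w by rewrite (bigD1 i).
have K_fupd w c : K (fupd w i c) = K w.
  by apply: eq_bigr => j /negPf ji; rewrite ffunE ji.
rewrite /prob (partition_big (fun w : {ffun C -> B} => w i) predT) //=.
apply: eq_bigr => b _.
transitivity (h i b * \sum_(w : {ffun C -> B} | w i == b) (w \in E)%:R * K w).
  rewrite big_distrr big_mkcondl /=; apply: eq_bigr => w /eqP wib.
  by rewrite weightE wib; case: (w \in E); rewrite ?mul1r ?mul0r ?mulr0.
congr (_ * _); symmetry.
rewrite big_mkcond /= (eq_bigr (fun w => h i (w i) * ((fupd w i b \in E)%:R * K w))).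
  rewrite (sum_marginal b) => [|w c]; last by rewrite fupd_fupd K_fupd.
  by apply: eq_bigr => w /eqP wib; rewrite -wib fupd_id.
by move=> w _; rewrite inE weightE; case: (_ \in E); rewrite ?mul1r ?mul0r ?mulr0.
Qed.

Lemma prob_ge0 E : 0 <= prob E.
Proof. by apply: sumr_ge0 => w _; apply: prodr_ge0. Qed.

Lemma le_prob E F : E \subset F -> prob E <= prob F.
Proof.
move=> sEF; rewrite /prob [X in _ <= X](big_setID E) /= (setIidPr sEF) lerDl.
by apply: sumr_ge0 => w _; apply: prodr_ge0.
Qed.

Lemma probUI E F : prob (E :|: F) + prob (E :&: F) = prob E + prob F.
Proof.
rewrite /prob (big_setID F) [X in _ = X + _](big_setID F) /=.
by rewrite setUC setUK setDUl setDv set0U; ring.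
Qed.

Lemma prob_setT : prob [set: {ffun C -> B}] = 1.
Proof.
rewrite /prob (eq_bigl predT) => [|w]; last by rewrite in_setT.
by rewrite -(bigA_distr_bigA h) big1.
Qed.

End ProductMeasure.

Section DisjointOccurrence.
Variable C : finType.
Implicit Types (w : config C) (E F : {set config C}) (P : {set C}).

Definition witness E P w := forall w', {in P, w' =1 w} -> w' \in E.

Lemma disj_occP E1 E2 w :
  reflect (exists P1 P2, [/\ [disjoint P1 & P2], witness E1 P1 w & witness E2 P2 w])
          (w \in disj_occ E1 E2).
Proof.
have witnessP E P : reflect (witness E P w)
    [forall w' : config C, [forall i in P, w' i == w i] ==> (w' \in E)].
  apply: (iffP forallP) => [wE w' ww'|wE w']; last first.
    by apply/implyP => /forall_inP ww'; apply: wE => i /ww' /eqP.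
  by apply: (implyP (wE w')); apply/forall_inP => i /ww' ->.
rewrite inE; apply: (iffP existsP) => [[P1 /existsP [P2]]|[P1 [P2 [dP wE1 wE2]]]].
  by case/andP => /andP [dP /witnessP wE1] /witnessP wE2; exists P1, P2.
by exists P1; apply/existsP; exists P2; rewrite dP; apply/andP; split; apply/witnessP.
Qed.

Lemma disj_occ_sub E1 E2 : disj_occ E1 E2 \subset E1 :&: E2.
Proof.
by apply/subsetP => w /disj_occP [P1 [P2 [_ wE1 wE2]]]; rewrite inE wE1 ?wE2.
Qed.

Lemma disj_occS E1 E2 F1 F2 :
  E1 \subset F1 -> E2 \subset F2 -> disj_occ E1 E2 \subset disj_occ F1 F2.
Proof.
move=> /subsetP sEF1 /subsetP sEF2; apply/subsetP => w /disj_occP [P1 [P2 [dP wE1 wE2]]].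
apply/disj_occP; exists P1, P2; split=> // w' ww'.
  by apply/sEF1/wE1.
by apply/sEF2/wE2.
Qed.

Lemma witness_slice E P w i a b :
  witness E P (fupd w i a) -> (i \in P -> b = a) -> witness (slice E i b) P w.
Proof.
move=> wE iPba w' ww'; rewrite inE; apply: wE => j jP; rewrite !ffunE.
by case: eqVneq => [ji|_]; [rewrite iPba -?ji | apply: ww'].
Qed.

(* On the side of a witness pair that avoids [i], the value [b] at [i] is irrelevant. *)
Lemma slice_disj_occ E1 E2 i a b :
  slice (disj_occ E1 E2) i a \subset
  disj_occ (slice E1 i a) (slice E2 i b) :|: disj_occ (slice E1 i b) (slice E2 i a).
Proof.
apply/subsetP => w; rewrite inE => /disj_occP [P1 [P2 [dP wE1 wE2]]].
rewrite inE; apply/orP; have [iP2|iNP2] := boolP (i \in P2).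
  right; apply/disj_occP; exists P1, P2; split=> //.
    by apply: witness_slice wE1 _ => iP1; rewrite (disjointFr dP iP1) in iP2.
  by apply: witness_slice wE2 _.
left; apply/disj_occP; exists P1, P2; split=> //.
  by apply: witness_slice wE1 _.
by apply: witness_slice wE2 _ => iP2; rewrite iP2 in iNP2.
Qed.

Lemma slice_increasing E i b : increasing E -> increasing (slice E i b).
Proof.
move=> incE w w'; rewrite !inE => wE ww'; apply: incE wE _ => j.
by rewrite !ffunE; case: eqP.
Qed.

Lemma slice_false_subset_true E i : increasing E -> slice E i false \subset slice E i true.
Proof.
move=> incE; apply/subsetP => w; rewrite !inE => wE; apply: incE wE _ => j.
by rewrite !ffunE; case: eqP.
Qed.

End DisjointOccurrence.

Lemma mixture_ineq (R : realDomainType) (p r11 r10 r01 r00 P00 P10 P01 P11 PU : R) :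
  0 <= r11 -> 0 <= r10 -> 0 <= r01 -> r11 + r10 + r01 + r00 = 1 ->
  p <= r11 + r10 -> p <= r11 + r01 ->
  P00 <= P10 -> P00 <= P01 -> P00 <= PU -> PU <= P11 -> PU + P00 <= P10 + P01 ->
  (1 - p) * P00 + p * PU <= r11 * P11 + r10 * P10 + r01 * P01 + r00 * P00.
Proof.
move=> r11_ge0 r10_ge0 r01_ge0 r_sum1 p_le1 p_le2 le10 le01 le0U leU1 leU.
rewrite -subr_ge0.
have -> : r11 * P11 + r10 * P10 + r01 * P01 + r00 * P00 - ((1 - p) * P00 + p * PU) =
    r11 * (P11 - P00) + r10 * (P10 - P00) + r01 * (P01 - P00) - p * (PU - P00).
  by rewrite -r_sum1; ring.
rewrite subr_ge0.
(* If p <= r11 the first term pays for everything; otherwise the excess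
   p - r11 is at most r10 and r01, and PU - P00 <= (P10 - P00) + (P01 - P00). *)
have [p_le_r11|r11_lt_p] := lerP p r11; nra.
Qed.

Definition bern (R : pzRingType) (C : finType) (p : C -> R) i (b : bool) : R :=
  if b then p i else 1 - p i.

Definition pair_event (C : finType) (E1 E2 : {set config C}) :
    {set {ffun C -> bool * bool}} :=
  [set u : {ffun C -> bool * bool} |
    ([ffun i => (u i).1] \in E1) && ([ffun i => (u i).2] \in E2)].

Lemma slice_pair_event (C : finType) (E1 E2 : {set config C}) i a b :
  slice (pair_event E1 E2) i (a, b) = pair_event (slice E1 i a) (slice E2 i b).
Proof.
apply/setP => u; rewrite !inE.
by congr ((_ \in E1) && (_ \in E2)); apply/ffunP => j; rewrite !ffunE; case: eqP.
Qed.

Section Coupling.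
Variables (R : realFieldType) (C : finType) (p : C -> R) (rho : C -> bool -> bool -> R).
Hypothesis p_prob : forall i, 0 <= p i <= 1.
Hypothesis rho_prob : forall i, is_prob2 (rho i).
Hypothesis rho_marg1 : forall i, p i <= rho i true true + rho i true false.
Hypothesis rho_marg2 : forall i, p i <= rho i true true + rho i false true.

Let rho2 i (ab : bool * bool) := rho i ab.1 ab.2.

Lemma bern_ge0 i b : 0 <= bern p i b.
Proof. by case/andP: (p_prob i) => p_ge0 p_le1; case: b; rewrite /bern ?subr_ge0. Qed.

Lemma bern_sum1 i : \sum_b bern p i b = 1.
Proof. by rewrite big_bool /bern /=; ring. Qed.

Lemma rho2_ge0 i ab : 0 <= rho2 i ab.
Proof. by case: (rho_prob i) => rho_ge0 _; apply: rho_ge0. Qed.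

Lemma rho2_sum1 i : \sum_ab rho2 i ab = 1.
Proof. by case: (rho_prob i) => _ <-; rewrite pair_bigA. Qed.

Lemma prob_pair_event_slice E1 E2 i :
  prob rho2 (pair_event E1 E2) =
  \sum_a \sum_b rho i a b * prob rho2 (pair_event (slice E1 i a) (slice E2 i b)).
Proof.
rewrite (prob_slice rho2_sum1 _ i) pair_bigA /=.
by apply: eq_bigr => -[a b] _; rewrite slice_pair_event.
Qed.

Lemma prob_disj_occ_le_const E1 E2 :
  depends_on E1 set0 -> depends_on E2 set0 ->
  prob (bern p) (disj_occ E1 E2) <= prob rho2 (pair_event E1 E2).
Proof.
move=> /depends_on_set0 dE1 /depends_on_set0 dE2.
apply: le_trans (le_prob bern_ge0 (disj_occ_sub E1 E2)) _.
have prob0 : prob (bern p) set0 = 0 by rewrite /prob big_set0.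
have [->|->] := dE1; first by rewrite set0I prob0 (prob_ge0 rho2_ge0).
have [->|->] := dE2; first by rewrite setI0 prob0 (prob_ge0 rho2_ge0).
have -> : pair_event [set: config C] [set: config C] = [set: {ffun C -> bool * bool}].
  by apply/setP => u; rewrite !inE.
by rewrite setIT (prob_setT bern_sum1) (prob_setT rho2_sum1).
Qed.

Lemma prob_disj_occ_le_mixture E1 E2 i :
  increasing E1 -> increasing E2 ->
  prob (bern p) (disj_occ E1 E2) <=
  \sum_a \sum_b rho i a b * prob (bern p) (disj_occ (slice E1 i a) (slice E2 i b)).
Proof.
move=> incE1 incE2.
pose P a b := prob (bern p) (disj_occ (slice E1 i a) (slice E2 i b)).
pose U := disj_occ (slice E1 i true) (slice E2 i false) :|:
          disj_occ (slice E1 i false) (slice E2 i true).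
have le_lhs :
    prob (bern p) (disj_occ E1 E2) <= (1 - p i) * P false false + p i * prob (bern p) U.
  rewrite (prob_slice bern_sum1 _ i) big_bool /= addrC.
  have [p_ge0 p_le1] := andP (p_prob i).
  rewrite lerD // ler_wpM2l ?subr_ge0 // le_prob //; try exact: bern_ge0.
    by have := slice_disj_occ E1 E2 i false false; rewrite setUid.
  exact: slice_disj_occ.
have s1 := slice_false_subset_true i incE1; have s2 := slice_false_subset_true i incE2.
have sub10 := disj_occS s1 (subxx (slice E2 i false)).
have sub01 := disj_occS (subxx (slice E1 i false)) s2.
have le0U : P false false <= prob (bern p) U.
  by rewrite /P /U; apply: (le_prob bern_ge0); apply: subset_trans sub10 (subsetUl _ _).
have leU1 : prob (bern p) U <= P true true.
  by rewrite /P /U; apply: (le_prob bern_ge0); rewrite subUset !disj_occS.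
have leU : prob (bern p) U + P false false <= P true false + P false true.
  rewrite /P /U -[X in _ <= X]probUI lerD2l.
  by apply: (le_prob bern_ge0); rewrite subsetI sub10.
have [rho_ge0 rho_sum1] := rho_prob i; rewrite !big_bool /= addrA in rho_sum1.
apply: le_trans le_lhs _; rewrite !big_bool /= !addrA.
by apply: mixture_ineq => //; apply: (le_prob bern_ge0).
Qed.

Lemma prob_disj_occ_le_coupling S E1 E2 :
  increasing E1 -> increasing E2 -> depends_on E1 S -> depends_on E2 S ->
  prob (bern p) (disj_occ E1 E2) <= prob rho2 (pair_event E1 E2).
Proof.
have [n] := ubnP #|S|; elim: n S E1 E2 => // n IH S E1 E2 ltSn incE1 incE2 dE1 dE2.
have [S0|[i iS]] := set_0Vmem S.
  by move: dE1 dE2; rewrite S0; apply: prob_disj_occ_le_const.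
apply: le_trans (prob_disj_occ_le_mixture i incE1 incE2) _.
rewrite (prob_pair_event_slice _ _ i); apply: ler_sum => a _; apply: ler_sum => b _.
apply: ler_wpM2l; first by case: (rho_prob i).
apply: (IH (S :\ i)); try exact: slice_increasing; try exact: slice_depends_on.
by move: ltSn; rewrite (cardsD1 i S) iS.
Qed.

End Coupling.

Section Transport.
Variable C : finType.

Definition zip_config (u : {ffun C -> bool * bool}) : config2 C :=
  [ffun x => if x.2 == ord0 then (u x.1).1 else (u x.1).2].

Definition unzip_config (w : config2 C) : {ffun C -> bool * bool} :=
  [ffun i => (w (i, ord0), w (i, ord_max))].

Lemma zip_configK : cancel zip_config unzip_config.
Proof. by move=> u; apply/ffunP => i; rewrite !ffunE /=; case: (u i). Qed.

Lemma unzip_configK : cancel unzip_config zip_config.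
Proof.
move=> w; apply/ffunP => -[i [[|[|k]] lt_k2]] //=; rewrite !ffunE /=;
  congr (w (i, _)); exact: val_inj.
Qed.

Lemma prod_rho_pair_event (R : numDomainType) (rho : C -> bool -> bool -> R) E1 E2 :
  prod_rho rho (prod_event E1 E2) = prob (fun i ab => rho i ab.1 ab.2) (pair_event E1 E2).
Proof.
rewrite /prod_rho (reindex zip_config); last first.
  by apply: onW_bij; exists unzip_config; [exact: zip_configK | exact: unzip_configK].
apply: eq_big => [u|u _]; last by apply: eq_bigr => i _; rewrite !ffunE.
by rewrite !inE; congr ((_ \in E1) && (_ \in E2)); apply/ffunP => i; rewrite !ffunE.
Qed.

End Transport.

Theorem proposition5p2 (R : realFieldType) (C : finType) (p : C -> R)
  (E1 E2 : {set config C}) (rho : C -> bool -> bool -> R) :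
  (forall i, 0 <= p i <= 1) ->
  increasing E1 -> increasing E2 ->
  (forall i, is_prob2 (rho i)) ->
  (* first marginal is Bernoulli(q) with q >= p i *)
  (forall i, p i <= rho i true true + rho i true false) ->
  (* second marginal is Bernoulli(q') with q' >= p i *)
  (forall i, p i <= rho i true true + rho i false true) ->
  bern_prod p (disj_occ E1 E2) <= prod_rho rho (prod_event E1 E2).
Proof.
move=> p_prob incE1 incE2 rho_prob rho_marg1 rho_marg2.
rewrite prod_rho_pair_event.
exact: (prob_disj_occ_le_coupling p_prob rho_prob rho_marg1 rho_marg2 incE1 incE2
  (depends_on_setT E1) (depends_on_setT E2)).
Qed.
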